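(* Let $\varphi=\frac{1+\sqrt5}{2}$. For a complex number $y$ and $n\ge1$ define $$\Big(1+\frac{y}{\varphi^n}\Big)_F^n=\prod_{k=0}^{n-1}\Big(1+(-1)^k\varphi^{\,n-1-2k}\frac{y}{\varphi^n}\Big).$$ For $q=-\varphi^2$ let $[k]_q=\frac{q^k-1}{q-1}$, $[0]_q!=1$, $[k]_q!=[1]_q[2]_q\cdots[k]_q$, and $e_q(z)=\sum_{k=0}^\infty\frac{z^k}{[k]_q!}$ (Jackson $q$-exponential). Then for every $y$, $$\lim_{n\to\infty}\Big(1+\frac{y}{\varphi^n}\Big)_F^n=e_{-\varphi^2}\Big(\frac{y}{\sqrt5}\Big).$$ *)

From Stdlib Require Import Reals ZArith.
From Coquelicot Require Export Coquelicot.
Open Scope R_scope.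

Definition phi : R := (1 + sqrt 5) / 2.

Definition qF : R := - phi ^ 2.

Definition qint (q : R) (k : nat) : R := (q ^ k - 1) / (q - 1).

Fixpoint qfact (q : R) (k : nat) : R :=
  match k with
  | O => 1
  | S k' => qfact q k' * qint q (S k')
  end.

Definition jackson_term (q : R) (z : C) (k : nat) : C :=
  Cdiv (Cpow z k) (RtoC (qfact q k)).

Definition jackson_exp_is (q : R) (z : C) (L : C) : Prop :=
  @is_series C_AbsRing C_NormedModule (jackson_term q z) L.

Definition fib_factor (n k : nat) (y : C) : C :=
  Cplus (RtoC 1)
    (Cmult (RtoC ((-1) ^ k * powerRZ phi (Z.of_nat n - 1 - 2 * Z.of_nat k)%Z))
           (Cdiv y (RtoC (phi ^ n)))).

Fixpoint fib_prod_aux (n m : nat) (y : C) : C :=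
  match m with
  | O => RtoC 1
  | S m' => Cmult (fib_prod_aux n m' y) (fib_factor n m' y)
  end.

Definition fib_prod (n : nat) (y : C) : C := fib_prod_aux n n y.

From Stdlib Require Import Reals Lra Lia Psatz ClassicalEpsilon.
From Coquelicot Require Import Coquelicot.
Open Scope R_scope.

(* With [w = y / sqrt 5] and [q = -phi^2], the [k]-th factor of the product is
   [1 + (q - 1) q^-(k+1) w], so applying the q-difference equation
   [e_q(q x) = (1 + (q - 1) x) e_q(x)] [n] times gives
   [e_q(w) = (1 + y/phi^n)_F^n * e_q(q^-n w)].  As [|q| > 1], [q^-n w] tends to [0],
   where [e_q] is continuous with value [1]; hence the product tends to [e_q(w)].
   The series [e_q] converges everywhere since [|[k]_q| >= k / 3] once [|q| >= 2]. *)

(* Junk value when the series diverges; for [|q| >= 2] see [jackson_exp_spec]. *)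
Definition jackson_exp (q : R) (z : C) : C :=
  @epsilon C (inhabits (RtoC 0)) (fun L => is_series (jackson_term q z) L).

Lemma RtoC_neq0 (x : R) : x <> 0 -> RtoC x <> 0%C.
Proof. intros Hx E. apply Hx. now injection E. Qed.

Lemma is_series_exp (x : R) : is_series (fun k => / INR (Factorial.fact k) * x ^ k) (exp x).
Proof. apply is_series_Reals. unfold exp. now destruct exist_exp. Qed.

Lemma norm_is_series_le {K : AbsRing} {V : NormedModule K}
  (a : nat -> V) (b : nat -> R) (la : V) (lb : R) :
  is_series a la -> is_series b lb -> (forall n, norm (a n) <= b n) -> norm la <= lb.
Proof.
  intros Ha Hb Hab.
  apply (is_lim_seq_le (fun N => norm (sum_n a N)) (sum_n b) (norm la) lb); [| |exact Hb].
  - intros N. eapply Rle_trans; [apply norm_sum_n_m|]. apply sum_n_m_le. exact Hab.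
  - exact (filterlim_comp _ _ _ (sum_n a) norm _ _ _ Ha (filterlim_norm la)).
Qed.

Lemma filterlim_of_Cmult_cvg_1 (a : C) (p b : nat -> C) :
  (forall n, a = (p n * b n)%C) ->
  filterlim b eventually (locally (RtoC 1)) -> filterlim p eventually (locally a).
Proof.
  intros Hab Hb.
  apply (filterlim_locally_ball_norm (K := C_AbsRing) (U := C_NormedModule)). intros eps.
  set (c := Cmod a). assert (Hc : 0 <= c) by apply Cmod_ge_0.
  assert (Heps := cond_pos eps).
  assert (Hd : 0 < Rmin (1/2) (eps / (2 * c + 1))).
  { apply Rmin_pos; [lra|]. apply Rdiv_lt_0_compat; lra. }
  assert (H1 := Rmin_l (1/2) (eps / (2 * c + 1))).
  assert (H2 := Rmin_r (1/2) (eps / (2 * c + 1))).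
  eapply filter_imp;
    [|exact (proj1 (filterlim_locally_ball_norm (K := C_AbsRing) (U := C_NormedModule) _ _) Hb
               (mkposreal _ Hd))].
  intros n Hn. unfold ball_norm in *. simpl in Hn.
  change (Cmod (b n - 1)%C < Rmin (1/2) (eps / (2 * c + 1))) in Hn.
  change (Cmod (p n - a)%C < eps).
  assert (Hdiff : (p n - a)%C = (- (p n * (b n - 1)))%C) by (rewrite (Hab n); ring).
  assert (Hbn : 1/2 <= Cmod (b n)).
  { assert (T := Cmod_triangle (b n) (- (b n - 1))%C).
    replace (b n + - (b n - 1))%C with (RtoC 1) in T by ring.
    rewrite Cmod_1, Cmod_opp in T. lra. }
  assert (Hpn : Cmod (p n) <= 2 * c).
  { assert (Hm : c = Cmod (p n) * Cmod (b n)) by (unfold c; rewrite (Hab n), Cmod_mult; reflexivity).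
    assert (H0 := Cmod_ge_0 (p n)). nra. }
  rewrite Hdiff, Cmod_opp, Cmod_mult.
  assert (H0 := Cmod_ge_0 (b n - 1)%C). assert (H3 := Cmod_ge_0 (p n)).
  apply Rle_lt_trans with ((2 * c + 1) * Cmod (b n - 1)%C); [nra|].
  apply Rlt_le_trans with ((2 * c + 1) * (eps / (2 * c + 1))); [nra|].
  right. field. lra.
Qed.

Section JacksonExponential.

Variable q : R.
Hypothesis q_abs_ge2 : 2 <= Rabs q.

Lemma q_neq0 : q <> 0.
Proof. intros E. rewrite E, Rabs_R0 in q_abs_ge2. lra. Qed.

Lemma q_sub1_neq0 : q - 1 <> 0.
Proof.
  intros E. replace q with 1 in q_abs_ge2 by lra. rewrite Rabs_R1 in q_abs_ge2. lra.
Qed.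

(* Bernoulli's inequality for [|q|^k], and [|q| - 1 >= (|q| + 1) / 3]. *)
Lemma qint_abs_ge (k : nat) : (1 <= k)%nat -> INR k / 3 <= Rabs (qint q k).
Proof.
  intros Hk. unfold qint. rewrite Rabs_div by exact q_sub1_neq0.
  assert (Hden0 : 0 < Rabs (q - 1)) by (apply Rabs_pos_lt, q_sub1_neq0).
  assert (Hden1 : Rabs (q - 1) <= Rabs q + 1).
  { unfold Rminus. eapply Rle_trans; [apply Rabs_triang|]. rewrite Rabs_Ropp, Rabs_R1. lra. }
  assert (Hnum : Rabs q ^ k - 1 <= Rabs (q ^ k - 1)).
  { rewrite RPow_abs, <- Rabs_R1 at 1. apply Rabs_triang_inv. }
  assert (Hbern := Rle_pow_lin (Rabs q - 1) k ltac:(lra)).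
  replace (1 + (Rabs q - 1)) with (Rabs q) in Hbern by ring.
  assert (HkR : 1 <= INR k) by (apply (le_INR 1); exact Hk).
  apply Rle_trans with ((Rabs q ^ k - 1) / (Rabs q + 1)).
  - apply (Rmult_le_reg_r (Rabs q + 1)); [lra|].
    unfold Rdiv. rewrite !Rmult_assoc, Rinv_l by lra. nra.
  - apply Rle_trans with (Rabs (q ^ k - 1) / Rabs (q - 1)); [|right; reflexivity].
    apply Rle_trans with ((Rabs q ^ k - 1) / Rabs (q - 1)).
    + apply Rmult_le_compat_l; [nra|]. apply Rinv_le_contravar; lra.
    + apply Rmult_le_compat_r; [apply Rlt_le, Rinv_0_lt_compat; lra | exact Hnum].
Qed.

Lemma qfact_abs_ge (k : nat) : INR (Factorial.fact k) / 3 ^ k <= Rabs (qfact q k).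
Proof.
  induction k as [|k IH]; simpl qfact.
  - rewrite Rabs_R1. simpl. lra.
  - rewrite Rabs_mult, fact_simpl, mult_INR.
    assert (H3 : 0 < 3 ^ k) by (apply pow_lt; lra).
    assert (Hf := INR_fact_lt_0 k).
    assert (Hq := qint_abs_ge (S k) ltac:(lia)).
    apply Rle_trans with (INR (Factorial.fact k) / 3 ^ k * (INR (S k) / 3)).
    + right. simpl. field. lra.
    + apply Rmult_le_compat; [apply Rdiv_le_0_compat; lra| |exact IH|exact Hq].
      apply Rdiv_le_0_compat; [apply pos_INR|lra].
Qed.

Lemma qfact_neq0 (k : nat) : qfact q k <> 0.
Proof.
  intros E. assert (H := qfact_abs_ge k). rewrite E, Rabs_R0 in H.
  assert (0 < INR (Factorial.fact k) / 3 ^ k).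
  { apply Rdiv_lt_0_compat; [apply INR_fact_lt_0 | apply pow_lt; lra]. }
  lra.
Qed.

Lemma jackson_term_norm_le (z : C) (k : nat) :
  Cmod (jackson_term q z k) <= / INR (Factorial.fact k) * (3 * Cmod z) ^ k.
Proof.
  unfold jackson_term. rewrite Cmod_div by apply RtoC_neq0, qfact_neq0.
  rewrite Cmod_pow, Cmod_R, Rpow_mult_distr.
  assert (Hf := INR_fact_lt_0 k). assert (H3 : 0 < 3 ^ k) by (apply pow_lt; lra).
  assert (Hz : 0 <= Cmod z ^ k) by apply pow_le, Cmod_ge_0.
  apply Rle_trans with (Cmod z ^ k / (INR (Factorial.fact k) / 3 ^ k)); [| right; field; lra].
  apply Rmult_le_compat_l; [exact Hz|].
  apply Rinv_le_contravar; [apply Rdiv_lt_0_compat; lra | apply qfact_abs_ge].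
Qed.

Lemma jackson_exp_spec (z : C) : is_series (jackson_term q z) (jackson_exp q z).
Proof.
  unfold jackson_exp. apply (epsilon_spec (A := C)).
  apply (ex_series_le (V := C_CompleteNormedModule) _ _ (jackson_term_norm_le z)).
  exists (exp (3 * Cmod z)). apply is_series_exp.
Qed.

(* [q^(k+1) - 1 = (q - 1) [k+1]_q] is the q-analogue of [(k+1) / (k+1)! = 1 / k!]. *)
Lemma jackson_term_mul_q (x : C) (k : nat) :
  jackson_term q (RtoC q * x) (S k) =
  (jackson_term q x (S k) + RtoC (q - 1) * x * jackson_term q x k)%C.
Proof.
  assert (Hq1 := q_sub1_neq0).
  assert (Hint : qint q (S k) <> 0).
  { intro E. assert (B := qint_abs_ge (S k) ltac:(lia)).
    rewrite E, Rabs_R0 in B. assert (0 < INR (S k)) by (apply lt_0_INR; lia). lra. }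
  assert (Hqk : q ^ S k - 1 <> 0).
  { intro E. apply Hint. unfold qint. rewrite E. unfold Rdiv. ring. }
  assert (Hf := RtoC_neq0 _ (qfact_neq0 k)).
  unfold jackson_term. simpl qfact. unfold qint in *.
  rewrite RtoC_mult, RtoC_div by exact Hq1.
  rewrite !RtoC_minus, RtoC_pow.
  rewrite Cpow_mult_l, !Cpow_S.
  assert (H2 : (RtoC q - RtoC 1)%C <> 0%C) by (rewrite <- RtoC_minus; apply RtoC_neq0, Hq1).
  assert (H3 : (RtoC q * Cpow (RtoC q) k - RtoC 1)%C <> 0%C).
  { rewrite <- RtoC_pow, <- RtoC_mult, <- RtoC_minus. apply RtoC_neq0. exact Hqk. }
  field. repeat split; assumption.
Qed.

Lemma is_series_jackson_term_S (w : C) :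
  is_series (fun k => jackson_term q w (S k)) (jackson_exp q w - 1)%C.
Proof.
  apply is_series_incr_1.
  assert (H0 : jackson_term q w 0 = RtoC 1) by (unfold jackson_term; simpl; field).
  rewrite H0. change plus with Cplus. simpl.
  replace (jackson_exp q w - 1 + 1)%C with (jackson_exp q w) by ring.
  apply jackson_exp_spec.
Qed.

Lemma jackson_exp_mul_q (x : C) :
  jackson_exp q (RtoC q * x) = ((1 + RtoC (q - 1) * x) * jackson_exp q x)%C.
Proof.
  assert (Hx := is_series_plus _ _ _ _ (is_series_jackson_term_S x)
                  (is_series_scal (V := C_NormedModule) (RtoC (q - 1) * x)%C _ _
                     (jackson_exp_spec x))).
  assert (Hqx : is_series (fun k => jackson_term q (RtoC q * x)%C (S k))
                  (plus (jackson_exp q x - 1)%C (scal (RtoC (q - 1) * x)%C (jackson_exp q x)))).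
  { eapply is_series_ext; [|exact Hx]. intros n. simpl. rewrite jackson_term_mul_q. reflexivity. }
  assert (U := filterlim_locally_unique _ _ _ (is_series_jackson_term_S (RtoC q * x)%C) Hqx).
  change plus with Cplus in U. change scal with Cmult in U. simpl in U.
  replace (jackson_exp q (RtoC q * x)%C) with ((jackson_exp q (RtoC q * x)%C - 1) + 1)%C by ring.
  rewrite U. ring.
Qed.

Lemma jackson_exp_sub1_norm_le (w : C) :
  Cmod w <= 1 -> Cmod (jackson_exp q w - 1)%C <= 3 * exp 3 * Cmod w.
Proof.
  intros Hw.
  apply (norm_is_series_le _ (fun k => 3 * Cmod w * (/ INR (Factorial.fact k) * 3 ^ k))
           _ _ (is_series_jackson_term_S w)).
  { replace (3 * exp 3 * Cmod w) with (3 * Cmod w * exp 3) by ring.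
    apply (is_series_scal_l (V := R_NormedModule)), is_series_exp. }
  intros k. eapply Rle_trans; [apply jackson_term_norm_le|].
  assert (Hf := INR_fact_lt_0 k).
  assert (Hff : INR (Factorial.fact k) <= INR (Factorial.fact (S k)))
    by (apply le_INR; rewrite fact_simpl; lia).
  assert (Hc := Cmod_ge_0 w).
  assert (Hwk : Cmod w ^ k <= 1) by (rewrite <- (pow1 k); apply pow_incr; lra).
  assert (H3 : 0 < 3 ^ k) by (apply pow_lt; lra).
  rewrite Rpow_mult_distr. simpl pow.
  apply Rle_trans with (/ INR (Factorial.fact k) * (3 * 3 ^ k * (Cmod w * 1))).
  - apply Rmult_le_compat.
    + apply Rlt_le, Rinv_0_lt_compat; lra.
    + apply Rmult_le_pos; apply Rmult_le_pos; try lra; apply pow_le; lra.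
    + apply Rinv_le_contravar; lra.
    + apply Rmult_le_compat_l; [nra|]. apply Rmult_le_compat_l; lra.
  - right. ring.
Qed.

Lemma jackson_exp_cvg_1 (u : nat -> C) :
  is_lim_seq (fun n => Cmod (u n)) 0 ->
  filterlim (fun n => jackson_exp q (u n)) eventually (locally (RtoC 1)).
Proof.
  intros Hu. apply (filterlim_locally_ball_norm (K := C_AbsRing) (U := C_NormedModule)). intros eps.
  assert (HK : 0 < 3 * exp 3 + 1) by (assert (H := exp_pos 3); lra).
  assert (Hd : 0 < Rmin 1 (eps / (3 * exp 3 + 1))).
  { apply Rmin_pos; [lra|]. apply Rdiv_lt_0_compat; [apply cond_pos|exact HK]. }
  apply is_lim_seq_spec in Hu. destruct (Hu (mkposreal _ Hd)) as [N HN].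
  exists N. intros n Hn. specialize (HN n Hn). simpl in HN.
  rewrite Rminus_0_r, Rabs_pos_eq in HN by apply Cmod_ge_0.
  assert (H1 := Rmin_l 1 (eps / (3 * exp 3 + 1))).
  assert (H2 := Rmin_r 1 (eps / (3 * exp 3 + 1))).
  assert (B := jackson_exp_sub1_norm_le (u n) ltac:(lra)).
  unfold ball_norm. change (Cmod (jackson_exp q (u n) - 1)%C < eps).
  assert (Hc := Cmod_ge_0 (u n)). assert (He := exp_pos 3).
  apply Rle_lt_trans with ((3 * exp 3 + 1) * Cmod (u n)); [nra|].
  apply Rlt_le_trans with ((3 * exp 3 + 1) * (eps / (3 * exp 3 + 1))); [nra|].
  right. field. lra.
Qed.

End JacksonExponential.

Lemma sqrt5_eq : sqrt 5 = 2 * phi - 1.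
Proof. unfold phi. field. Qed.

Lemma sqrt5_neq0 : sqrt 5 <> 0.
Proof. assert (H := sqrt_lt_R0 5 ltac:(lra)). lra. Qed.

Lemma phi_gt1 : 1 < phi.
Proof.
  assert (H : 1 < sqrt 5) by (rewrite <- sqrt_1; apply sqrt_lt_1; lra). unfold phi. lra.
Qed.

Lemma phi_sq : phi ^ 2 = phi + 1.
Proof.
  assert (H := sqrt_sqrt 5 ltac:(lra)). rewrite sqrt5_eq in H. nra.
Qed.

Lemma qF_abs_ge2 : 2 <= Rabs qF.
Proof. unfold qF. rewrite Rabs_Ropp, phi_sq, Rabs_pos_eq; assert (H := phi_gt1); lra. Qed.

Lemma fib_coef_eq (n k : nat) :
  (-1) ^ k * powerRZ phi (Z.of_nat n - 1 - 2 * Z.of_nat k) =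
  (qF - 1) * (/ qF) ^ S k * phi ^ n / sqrt 5.
Proof.
  assert (Hphi := phi_gt1).
  assert (Hpow : powerRZ phi (Z.of_nat n - 1 - 2 * Z.of_nat k) * phi ^ (2 * S k) = phi * phi ^ n).
  { rewrite !pow_powerRZ, <- powerRZ_add by lra.
    replace (phi * powerRZ phi (Z.of_nat n)) with (powerRZ phi (1 + Z.of_nat n))
      by (rewrite powerRZ_add by lra; simpl; ring).
    f_equal. lia. }
  assert (Hinv : (/ qF) ^ S k = - (-1) ^ k / phi ^ (2 * S k)).
  { unfold qF. replace (/ - phi ^ 2) with (-1 * / phi ^ 2) by (field; nra).
    rewrite Rpow_mult_distr, pow_inv, pow_mult. simpl (_ ^ S k). field.
    split; [apply pow_nonzero|]; nra. }
  assert (HP : 0 < phi ^ (2 * S k)) by (apply pow_lt; lra).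
  assert (Hn : 0 < phi ^ n) by (apply pow_lt; lra).
  rewrite Hinv, sqrt5_eq.
  apply (Rmult_eq_reg_r (phi ^ (2 * S k))); [|lra].
  rewrite Rmult_assoc, Hpow.
  replace (qF - 1) with (- (phi * (2 * phi - 1))) by (unfold qF; assert (H := phi_sq); nra).
  field. lra.
Qed.

Lemma fib_factor_eq (n k : nat) (y : C) :
  fib_factor n k y = (1 + RtoC (qF - 1) * (RtoC ((/ qF) ^ S k) * (y / RtoC (sqrt 5))))%C.
Proof.
  unfold fib_factor. rewrite fib_coef_eq.
  assert (Hn : phi ^ n <> 0) by (apply pow_nonzero; assert (H := phi_gt1); lra).
  rewrite RtoC_div by exact sqrt5_neq0. rewrite !RtoC_mult.
  field. split; apply RtoC_neq0; [exact sqrt5_neq0 | exact Hn].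
Qed.

Lemma jackson_exp_fib_prod_aux (n m : nat) (y : C) :
  jackson_exp qF (y / RtoC (sqrt 5)) =
  (fib_prod_aux n m y * jackson_exp qF (RtoC ((/ qF) ^ m) * (y / RtoC (sqrt 5))))%C.
Proof.
  assert (Hq : qF <> 0) by exact (q_neq0 _ qF_abs_ge2).
  induction m as [|m IH]; simpl fib_prod_aux.
  - simpl pow. replace (RtoC 1 * (y / RtoC (sqrt 5)))%C with (y / RtoC (sqrt 5))%C by ring. ring.
  - rewrite IH, <- Cmult_assoc. f_equal.
    replace (RtoC ((/ qF) ^ m) * (y / RtoC (sqrt 5)))%C
      with (RtoC qF * (RtoC ((/ qF) ^ S m) * (y / RtoC (sqrt 5))))%C.
    + rewrite jackson_exp_mul_q by exact qF_abs_ge2. now rewrite fib_factor_eq.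
    + rewrite Cmult_assoc, <- RtoC_mult. simpl pow. do 2 f_equal. field. exact Hq.
Qed.

Lemma is_lim_seq_Cmod_geom (r : R) (w : C) :
  Rabs r < 1 -> is_lim_seq (fun n => Cmod (RtoC (r ^ n) * w)) 0.
Proof.
  intros Hr. replace 0 with (0 * Cmod w) by ring.
  apply (is_lim_seq_ext (fun n => Rabs r ^ n * Cmod w)).
  - intros n. now rewrite Cmod_mult, Cmod_R, RPow_abs.
  - apply is_lim_seq_mult'; [|apply is_lim_seq_const].
    apply is_lim_seq_geom. rewrite Rabs_Rabsolu. exact Hr.
Qed.

Theorem mainTheorem13 : forall y : C,
  exists L : C,
    jackson_exp_is qF (Cdiv y (RtoC (sqrt 5))) L /\
    filterlim (fun n : nat => fib_prod n y) eventually (locally L).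
Proof.
  intros y. set (w := Cdiv y (RtoC (sqrt 5))).
  exists (jackson_exp qF w). split; [exact (jackson_exp_spec _ qF_abs_ge2 w)|].
  apply (filterlim_of_Cmult_cvg_1 _ _ (fun n => jackson_exp qF (RtoC ((/ qF) ^ n) * w))).
  - intros n. exact (jackson_exp_fib_prod_aux n n y).
  - apply (jackson_exp_cvg_1 _ qF_abs_ge2), is_lim_seq_Cmod_geom.
    rewrite Rabs_inv. assert (H := qF_abs_ge2).
    rewrite <- Rinv_1. apply Rinv_lt_contravar; lra.
Qed.
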